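(* Consider the closed-loop system $$\dot x = Ax + Bu + Qw,\qquad \dot u = -\epsilon\, \widetilde H^T \nabla \Phi(x,u),$$ with $x\in\mathbb{R}^n$, $u\in\mathbb{R}^p$, a constant disturbance $w\in\mathbb{R}^q$ and a gain $\epsilon>0$. Suppose that: (i) there is a symmetric positive definite $P$ with $A^TP+PA\preceq -I_n$; (ii) $\tilde\Phi^w(u):=\Phi(Hu+Rw,u)$ is differentiable in $u$ for all $u$ and $w$; (iii) there exists $\ell>0$ with $\|\widetilde H^T(\nabla\Phi(x,u)-\nabla\Phi(x',u))\|\le \ell\|x-x'\|$ for all $x,x'\in\mathbb{R}^n$, $u\in\mathbb{R}^p$; (iv) the sublevel sets of $\tilde\Phi^w$ are compact; (v) $\Phi$ is convex. If $\epsilon<\frac{1}{2\ell\|PH\|}$, then every trajectory of the closed-loop system converges to the set of global solutions of $$\min_{x,u}\ \Phi(x,u)\quad\text{subject to}\quad x=Hu+Rw.$$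
   Context: $A\in\mathbb{R}^{n\times n}$, $B\in\mathbb{R}^{n\times p}$, $Q\in\mathbb{R}^{n\times q}$ are real matrices; under (i) $A$ is invertible, and $H:=-A^{-1}B$, $R:=-A^{-1}Q$, $\widetilde H^T:=[\,H^T\ \ I_p\,]$. $\Phi:\mathbb{R}^n\times\mathbb{R}^p\to\mathbb{R}$ is a differentiable cost function with gradient $\nabla\Phi(x,u)\in\mathbb{R}^{n+p}$. Norms are Euclidean / induced 2-norms. The disturbance $w$ is fixed. *)

From HB Require Import structures.
From mathcomp Require Import all_boot all_order all_algebra.
From mathcomp Require Import all_classical all_reals all_analysis.
Set Implicit Arguments. Unset Strict Implicit. Unset Printing Implicit Defensive.
Import Order.TTheory GRing.Theory Num.Theory.
Import numFieldNormedType.Exports.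
Local Open Scope ring_scope.
Local Open Scope classical_set_scope.

Definition enorm {R : realType} {k : nat} (v : 'cV[R]_k) : R :=
  Num.sqrt (\sum_(i < k) v i 0 ^+ 2).

Definition opnorm {R : realType} {m k : nat} (M : 'M[R]_(m, k)) : R :=
  sup [set enorm (M *m v) | v in [set v : 'cV[R]_k | enorm v <= 1]].

Definition qform {R : realType} {k : nat} (M : 'M[R]_k) (v : 'cV[R]_k) : R :=
  (v^T *m M *m v) 0 0.

Definition grad {R : realType} {k : nat} (f : 'cV[R]_k -> R) (z : 'cV[R]_k)
  : 'cV[R]_k := \col_i ('D_(delta_mx i 0) f z).

Definition Hmat {R : realType} {n p : nat} (A : 'M[R]_n) (B : 'M[R]_(n, p))
  : 'M[R]_(n, p) := - (invmx A *m B).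
Definition Rmat {R : realType} {n q : nat} (A : 'M[R]_n) (Q : 'M[R]_(n, q))
  : 'M[R]_(n, q) := - (invmx A *m Q).
Definition HtT {R : realType} {n p : nat} (A : 'M[R]_n) (B : 'M[R]_(n, p))
  : 'M[R]_(p, n + p) := row_mx (Hmat A B)^T 1%:M.

Definition Phitil {R : realType} {n p q : nat} (A : 'M[R]_n) (B : 'M[R]_(n, p))
  (Q : 'M[R]_(n, q)) (Phi : 'cV[R]_(n + p) -> R) (w : 'cV[R]_q) (u : 'cV[R]_p) : R :=
  Phi (col_mx (Hmat A B *m u + Rmat A Q *m w) u).

Definition solution_set {R : realType} {n p q : nat} (A : 'M[R]_n)
  (B : 'M[R]_(n, p)) (Q : 'M[R]_(n, q)) (Phi : 'cV[R]_(n + p) -> R)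
  (w : 'cV[R]_q) : set ('cV[R]_n * 'cV[R]_p) :=
  [set xu | xu.1 = Hmat A B *m xu.2 + Rmat A Q *m w /\
     forall x' u', x' = Hmat A B *m u' + Rmat A Q *m w ->
       Phi (col_mx xu.1 xu.2) <= Phi (col_mx x' u')].

Definition convex_fun {R : realType} {k : nat} (f : 'cV[R]_k -> R) : Prop :=
  forall z1 z2 (t : R), 0 <= t <= 1 ->
    f (t *: z1 + (1 - t) *: z2) <= t * f z1 + (1 - t) * f z2.

(* Write z = x - (H u + R w) for the distance of the state from its equilibrium for
   the current input and f = Htilde^T grad Phi(x, u), so that u' = - eps f and
   z' = A z + eps H f, while f differs from the gradient g of the reduced cost
   Phi~ at u by at most ell |z|.  For c slightly above |P H| the function
     V = z^T P z + (2 c / ell) (Phi~(u) - min Phi~)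
   satisfies V' <= - d (|z|^2 + |f|^2) with d > 0, and this is exactly where
   eps < 1 / (2 ell |P H|) is used.  Hence V decreases, u stays in a compact
   sublevel set of Phi~, and convexity gives Phi~(u) - min Phi~ <= |g| |u - u*|,
   so V is small as soon as |z| and |f| are; the decay of V then forces V -> 0.
   Thus z -> 0 and Phi~(u) -> min Phi~, which by compactness of the sublevel sets
   brings (x, u) close to the set of constrained minimisers. *)

From HB Require Import structures.
From mathcomp Require Import all_boot all_order all_algebra.
From mathcomp Require Import all_classical all_reals all_analysis.
From mathcomp Require Import ring lra.
Import Order.TTheory GRing.Theory Num.Theory.
Import numFieldNormedType.Exports.
Local Open Scope ring_scope.
Local Open Scope classical_set_scope.
Set Implicit Arguments. Unset Strict Implicit. Unset Printing Implicit Defensive.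

Section Euclidean.
Variable R : realType.
Implicit Types (k l : nat) (t : R).

Definition dot k (a b : 'cV[R]_k) : R := (a^T *m b) 0 0.

Lemma dotE k (a b : 'cV[R]_k) : dot a b = \sum_i a i 0 * b i 0.
Proof. by rewrite /dot mxE; apply: eq_bigr => i _; rewrite mxE. Qed.

Lemma dotC k (a b : 'cV[R]_k) : dot a b = dot b a.
Proof. by rewrite /dot -[a^T *m b]trmxK trmx_mul trmxK mxE. Qed.

Lemma dotDl k (a b c : 'cV[R]_k) : dot (a + b) c = dot a c + dot b c.
Proof. by rewrite /dot linearD mulmxDl mxE. Qed.

Lemma dotDr k (a b c : 'cV[R]_k) : dot c (a + b) = dot c a + dot c b.
Proof. by rewrite /dot mulmxDr mxE. Qed.

Lemma dotZl k t (a b : 'cV[R]_k) : dot (t *: a) b = t * dot a b.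
Proof. by rewrite /dot linearZ -scalemxAl mxE. Qed.

Lemma dotZr k t (a b : 'cV[R]_k) : dot a (t *: b) = t * dot a b.
Proof. by rewrite /dot -scalemxAr mxE. Qed.

Lemma dotBl k (a b c : 'cV[R]_k) : dot (a - b) c = dot a c - dot b c.
Proof. by rewrite dotDl -scaleN1r dotZl mulN1r. Qed.

Lemma dotNr k (a b : 'cV[R]_k) : dot a (- b) = - dot a b.
Proof. by rewrite -scaleN1r dotZr mulN1r. Qed.

Lemma dot0l k (b : 'cV[R]_k) : dot 0 b = 0.
Proof. by rewrite /dot linear0 mul0mx mxE. Qed.

Lemma dot_mulmx k l (M : 'M[R]_(k, l)) a b : dot a (M *m b) = dot (M^T *m a) b.
Proof. by rewrite /dot trmx_mul trmxK mulmxA. Qed.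

Lemma qformE k (M : 'M[R]_k) v : qform M v = dot v (M *m v).
Proof. by rewrite /qform -mulmxA. Qed.

Lemma dot_ge0 k (a : 'cV[R]_k) : 0 <= dot a a.
Proof. by rewrite dotE; apply: sumr_ge0 => i _; rewrite -expr2 sqr_ge0. Qed.

Lemma discriminant_le0 (a b c : R) : 0 <= c ->
  (forall t, 0 <= a + 2 * b * t + c * t ^+ 2) -> b ^+ 2 <= a * c.
Proof.
move=> c_ge0 pos; have [c_gt0|] := ltP 0 c.
  have := pos (- b / c).
  have -> : a + 2 * b * (- b / c) + c * (- b / c) ^+ 2 = a - b ^+ 2 / c.
    by field; rewrite gt_eqF.
  by rewrite subr_ge0 ler_pdivrMr // mulrC.
move=> c_le0; have c0 : c = 0 by apply/eqP; rewrite eq_le c_le0 c_ge0.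
subst c; have [-> | b_neq0] := eqVneq b 0; first by rewrite expr0n mulr0.
have := pos (- (a + 1) / (2 * b)).
have -> : a + 2 * b * (- (a + 1) / (2 * b)) + 0 * (- (a + 1) / (2 * b)) ^+ 2 = -1.
  by field.
by rewrite ler0N1.
Qed.

Lemma psd_dot_CauchySchwarz k (M : 'M[R]_k) (a b : 'cV[R]_k) : M^T = M ->
  (forall v, 0 <= dot v (M *m v)) ->
  dot a (M *m b) ^+ 2 <= dot a (M *m a) * dot b (M *m b).
Proof.
move=> MT M_psd; apply: discriminant_le0 => // t.
have Msym : dot b (M *m a) = dot a (M *m b) by rewrite dot_mulmx MT dotC.
have := M_psd (a + t *: b).
rewrite !(mulmxDr, dotDl, dotDr, dotZl) -!scalemxAr !dotZr Msym.
by congr (0 <= _); ring.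
Qed.

Lemma dot_CauchySchwarz k (a b : 'cV[R]_k) : dot a b ^+ 2 <= dot a a * dot b b.
Proof.
have := @psd_dot_CauchySchwarz k 1%:M a b (trmx1 _ _).
by rewrite !mul1mx; apply => v; rewrite mul1mx dot_ge0.
Qed.

Lemma enorm_ge0 k (a : 'cV[R]_k) : 0 <= enorm a.
Proof. exact: sqrtr_ge0. Qed.

Lemma enormE k (a : 'cV[R]_k) : enorm a = Num.sqrt (dot a a).
Proof. by rewrite dotE; congr Num.sqrt; apply: eq_bigr => i _; rewrite expr2. Qed.

Lemma enorm_sqr k (a : 'cV[R]_k) : enorm a ^+ 2 = dot a a.
Proof. by rewrite enormE sqr_sqrtr // dot_ge0. Qed.

Lemma normr_dot_le k (a b : 'cV[R]_k) : `|dot a b| <= enorm a * enorm b.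
Proof.
rewrite -ler_sqr ?nnegrE ?mulr_ge0 ?enorm_ge0 //.
by rewrite real_normK ?num_real // exprMn !enorm_sqr dot_CauchySchwarz.
Qed.

Lemma dot_le k (a b : 'cV[R]_k) : dot a b <= enorm a * enorm b.
Proof. exact: le_trans (ler_norm _) (normr_dot_le _ _). Qed.

Lemma enormZ k t (a : 'cV[R]_k) : enorm (t *: a) = `|t| * enorm a.
Proof. by rewrite !enormE dotZl dotZr mulrA -expr2 sqrtrM ?sqr_ge0 // sqrtr_sqr. Qed.

Lemma enormN k (a : 'cV[R]_k) : enorm (- a) = enorm a.
Proof. by rewrite -scaleN1r enormZ normrN1 mul1r. Qed.

Lemma enormB k (a b : 'cV[R]_k) : enorm (a - b) = enorm (b - a).
Proof. by rewrite -enormN opprB. Qed.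

Lemma enormD k (a b : 'cV[R]_k) : enorm (a + b) <= enorm a + enorm b.
Proof.
rewrite -ler_sqr ?nnegrE ?addr_ge0 ?enorm_ge0 //.
rewrite enorm_sqr sqrrD !enorm_sqr !(dotDl, dotDr) (dotC b a).
have := dot_le a b; lra.
Qed.

Lemma enorm0 k : enorm (0 : 'cV[R]_k) = 0.
Proof. by rewrite enormE dot0l sqrtr0. Qed.

Lemma enorm_eq0 k (a : 'cV[R]_k) : (enorm a == 0) = (a == 0).
Proof.
apply/idP/eqP => [|->]; last by rewrite enorm0.
rewrite enormE sqrtr_eq0 => aa_le0.
have : dot a a == 0 by rewrite eq_le aa_le0 dot_ge0.
rewrite dotE psumr_eq0 => [/allP a0|i _]; last by rewrite -expr2 sqr_ge0.
apply/matrixP => i j; rewrite ord1 mxE.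
by have /implyP/(_ isT) := a0 i (mem_index_enum _); rewrite mulf_eq0 orbb => /eqP.
Qed.

Lemma enorm_col_mx k l (a : 'cV[R]_k) (b : 'cV[R]_l) :
  enorm (col_mx a b) <= enorm a + enorm b.
Proof.
rewrite -ler_sqr ?nnegrE ?addr_ge0 ?enorm_ge0 //.
have -> : enorm (col_mx a b) ^+ 2 = enorm a ^+ 2 + enorm b ^+ 2.
  by rewrite !enorm_sqr !dotE big_split_ord /=; congr (_ + _);
    apply: eq_bigr => i _; rewrite ?col_mxEu ?col_mxEd.
by have := mulr_ge0 (enorm_ge0 a) (enorm_ge0 b); rewrite sqrrD; lra.
Qed.

Lemma enorm_le_normr k (a : 'cV[R]_k) : enorm a <= k%:R * `|a|.
Proof.
have a_le i : `|a i 0| <= `|a|.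
  rewrite [leRHS]/Num.Def.normr /= mx_normrE.
  exact: le_trans (le_bigmax _ _ (i, 0)).
rewrite -ler_sqr ?nnegrE ?mulr_ge0 ?enorm_ge0 ?ler0n //.
rewrite enorm_sqr dotE (@le_trans _ _ (\sum_(i < k) `|a| ^+ 2)) //.
  apply: ler_sum => i _; rewrite -expr2 -real_normK ?num_real //.
  by rewrite ler_sqr ?nnegrE.
rewrite sumr_const card_ord -[_ *+ k]mulr_natl exprMn ler_wpM2r ?sqr_ge0 // -natrX ler_nat.
by case: (k) => // k'; rewrite leq_pmulr.
Qed.

Lemma enorm_mulmx_le_frobenius k l (M : 'M[R]_(k, l)) v :
  enorm (M *m v) <= Num.sqrt (\sum_i \sum_j M i j ^+ 2) * enorm v.
Proof.
have sqr_sum_ge0 : 0 <= \sum_i \sum_j M i j ^+ 2.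
  by apply: sumr_ge0 => i _; apply: sumr_ge0 => j _; apply: sqr_ge0.
have Mv_row i : (M *m v) i 0 = dot (row i M)^T v by rewrite /dot trmxK -row_mul [RHS]mxE.
rewrite (enormE v) -sqrtrM // ler_sqrt ?mulr_ge0 ?dot_ge0 // mulr_suml.
apply: ler_sum => i _; rewrite Mv_row.
apply: le_trans (dot_CauchySchwarz _ _) _; rewrite ler_wpM2r ?dot_ge0 // dotE.
by under eq_bigr do rewrite !mxE -expr2.
Qed.

End Euclidean.

Section OperatorNorm.
Variable R : realType.
Implicit Types (k l : nat).

Lemma opnorm_has_sup k l (M : 'M[R]_(k, l)) :
  has_sup [set enorm (M *m v) | v in [set v : 'cV[R]_l | enorm v <= 1]].
Proof.
split; first by exists (enorm (M *m 0)), 0 => //=; rewrite enorm0 ler01.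
exists (Num.sqrt (\sum_i \sum_j M i j ^+ 2)) => _ [v /= v_le1 <-].
apply: le_trans (enorm_mulmx_le_frobenius _ _) _.
by rewrite ler_piMr ?sqrtr_ge0.
Qed.

Lemma opnorm_ge0 k l (M : 'M[R]_(k, l)) : 0 <= opnorm M.
Proof.
have /(sup_upper_bound (opnorm_has_sup M)) : [set enorm (M *m v) | v in
    [set v : 'cV[R]_l | enorm v <= 1]] (enorm (M *m 0)).
  by exists 0 => //=; rewrite enorm0 ler01.
by rewrite mulmx0 enorm0.
Qed.

Lemma enorm_mulmx_le k l (M : 'M[R]_(k, l)) v : enorm (M *m v) <= opnorm M * enorm v.
Proof.
have [-> | v_neq0] := eqVneq v 0; first by rewrite mulmx0 !enorm0 mulr0.
have v_gt0 : 0 < enorm v by rewrite lt_def enorm_eq0 v_neq0 enorm_ge0.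
rewrite mulrC -ler_pdivrMl // -[X in X * _]ger0_norm ?invr_ge0 ?enorm_ge0 //.
rewrite -enormZ scalemxAr; apply: (sup_upper_bound (opnorm_has_sup M)).
by exists ((enorm v)^-1 *: v); rewrite //= enormZ ger0_norm ?invr_ge0 ?enorm_ge0 // mulVf ?gt_eqF.
Qed.

End OperatorNorm.

Section Lyapunov.
Variables (R : realType) (k : nat) (A P : 'M[R]_k).
Hypothesis P_sym : P^T = P.
Hypothesis P_posdef : forall v, v != 0 -> 0 < qform P v.
Hypothesis lyapunov : forall v, qform (A^T *m P + P *m A) v <= - qform 1%:M v.

Lemma qform_ge0 v : 0 <= qform P v.
Proof. by have [->|/P_posdef/ltW//] := eqVneq v 0; rewrite qformE dot0l. Qed.

Lemma qform_le v : qform P v <= opnorm P * enorm v ^+ 2.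
Proof.
rewrite qformE; apply: le_trans (dot_le _ _) _.
by rewrite mulrC expr2 mulrA ler_wpM2r ?enorm_ge0 ?enorm_mulmx_le.
Qed.

Lemma lyapunov_dot v : enorm v ^+ 2 <= - 2 * dot v (P *m (A *m v)).
Proof.
have := lyapunov v; rewrite !qformE mul1mx mulmxDl dotDr -!mulmxA.
rewrite dot_mulmx trmxK [dot (A *m v) _]dot_mulmx P_sym [dot (P *m _) v]dotC.
by rewrite enorm_sqr; lra.
Qed.

Lemma lyapunov_unitmx : A \in unitmx.
Proof.
rewrite unitmxE unitfE -det_tr; apply/det0P => -[v v_neq0 vA].
have Av0 : A *m v^T = 0 by rewrite -[A]trmxK -trmx_mul vA trmx0.
have := lyapunov_dot v^T; rewrite Av0 mulmx0 dotC dot0l mulr0.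
rewrite real_exprn_even_le0 ?num_real // enorm_eq0 trmx_eq0.
by apply/negP.
Qed.

(* |v|^2 <= -2 <v, P A v>, and Cauchy-Schwarz for the form P bounds the right-hand
   side by 2 (v^T P v)^(1/2) |P|^(1/2) |A| |v|: no eigenvalue theory is needed. *)
Lemma enorm_sqr_le_qform v : enorm v ^+ 2 <= 4 * opnorm P * opnorm A ^+ 2 * qform P v.
Proof.
set N := enorm v ^+ 2; set c := opnorm P * opnorm A ^+ 2.
have N_ge0 : 0 <= N := sqr_ge0 _.
have c_ge0 : 0 <= c by rewrite mulr_ge0 ?sqr_ge0 ?opnorm_ge0.
have P_psd w : 0 <= dot w (P *m w) by rewrite -qformE qform_ge0.
have := psd_dot_CauchySchwarz v (A *m v) P_sym P_psd.
rewrite -!qformE => CS.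
have qAv : qform P (A *m v) <= c * N.
  apply: le_trans (qform_le _) _; rewrite -mulrA ler_wpM2l ?opnorm_ge0 // -exprMn.
  by rewrite ler_sqr ?nnegrE ?mulr_ge0 ?opnorm_ge0 ?enorm_ge0 ?enorm_mulmx_le.
have NN : N * N <= N * (4 * c * qform P v).
  have := lyapunov_dot v; rewrite -/N => lyap.
  have := qform_ge0 v; have := qform_ge0 (A *m v); nra.
have [N_gt0 | N_le0] := ltP 0 N.
  by rewrite -(ler_pM2l N_gt0); move: NN; rewrite /c !mulrA.
by apply: le_trans N_le0 _; rewrite mulr_ge0 ?qform_ge0 // -mulrA mulr_ge0.
Qed.

End Lyapunov.

Section Derivative.
Variables (R : realType) (V : normedModType R).
Implicit Types (t v : V).

Lemma is_derive_mx_entry m n (M : V -> 'M[R]_(m, n)) t v (dM : 'M[R]_(m, n)) i j :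
  is_derive t v M dM -> is_derive t v (fun s => M s i j) (dM i j).
Proof.
move=> [dMt <-]; apply: DeriveDef; first exact: (derivable_mxP M t v).1 dMt i j.
by rewrite (derive_mx dMt) mxE.
Qed.

Lemma is_derive_mx m n (M : V -> 'M[R]_(m, n)) t v (dM : 'M[R]_(m, n)) :
  (forall i j, is_derive t v (fun s => M s i j) (dM i j)) -> is_derive t v M dM.
Proof.
move=> dMij.
have dMt : derivable M t v by apply/derivable_mxP => i j; have [] := dMij i j.
apply: DeriveDef => //; rewrite (derive_mx dMt); apply/matrixP => i j.
by rewrite mxE; have [] := dMij i j.
Qed.

Lemma is_derive_mulmxl m k l (C : 'M[R]_(m, k)) (F : V -> 'M[R]_(k, l)) t v dF :
  is_derive t v F dF -> is_derive t v (fun s => C *m F s) (C *m dF).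
Proof.
move=> dFt; apply: is_derive_mx => i j.
have -> : (fun s => (C *m F s) i j) = \sum_r (C i r \*: (fun s => F s r j)).
  by apply/funext => s; rewrite mxE fct_sumE.
rewrite mxE; apply: is_derive_sum => r; apply: is_deriveZ.
exact: is_derive_mx_entry.
Qed.

Lemma is_derive_dot k (a b : V -> 'cV[R]_k) t v da db :
  is_derive t v a da -> is_derive t v b db ->
  is_derive t v (fun s => dot (a s) (b s)) (dot da (b t) + dot (a t) db).
Proof.
move=> dat dbt.
have -> : (fun s => dot (a s) (b s)) = \sum_i ((fun s => a s i 0) * (fun s => b s i 0)).
  by apply/funext => s; rewrite dotE fct_sumE.
apply: is_derive_eq; first by apply: is_derive_sum => i; apply: is_deriveM;
  apply: is_derive_mx_entry.
rewrite !dotE -big_split; apply: eq_bigr => i _ /=.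
by rewrite addrC [da i 0 * _]mulrC.
Qed.

Lemma is_derive1_diff_comp (U W : normedModType R) (f : U -> W) (g : R -> U) (t : R) dg :
  is_derive t 1 g dg -> differentiable f (g t) ->
  is_derive t 1 (f \o g) ('d f (g t) dg).
Proof.
move=> [/derivable1_diffP dgt <-] dft.
have dfg : differentiable (f \o g) t by exact: differentiable_comp.
apply: DeriveDef; first exact/derivable1_diffP.
by rewrite (deriveE _ dfg) (diff_comp dgt dft) /= -(deriveE _ dgt).
Qed.

End Derivative.

Lemma diff_grad (R : realType) k (f : 'cV[R]_k -> R) z v :
  differentiable f z -> 'd f z v = dot (grad f z) v.
Proof.
move=> dfz; rewrite {1}(matrix_sum_delta v) linear_sum dotE.
apply: eq_bigr => i _.
by rewrite big_ord1 linearZ /= mxE (deriveE _ dfz) mulrC.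
Qed.

Lemma derive1_le0_nonincreasing (R : realType) (f : R -> R) (a : R) :
  (forall t, a < t -> derivable f t 1) -> (forall t, a < t -> f^`() t <= 0) ->
  forall s t, a < s -> s <= t -> f t <= f s.
Proof.
move=> df df_le0 s t a_lt_s s_le_t.
have a_lt r : r \in `[s, t]%R -> a < r.
  by rewrite in_itv /= => /andP[sr _]; apply: lt_le_trans sr.
apply: (@ler0_derive1_le_cc _ f s t) => //.
- by move=> r /subset_itv_oo_cc /a_lt; apply: df.
- by move=> r /subset_itv_oo_cc /a_lt; apply: df_le0.
- by apply: derivable_within_continuous => r /a_lt; apply: df.
- by rewrite in_itv /= lexx s_le_t.
- by rewrite in_itv /= lexx s_le_t.
Qed.

Lemma convex_fun_grad_le (R : realType) k (f : 'cV[R]_k -> R) y y' :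
  convex_fun f -> differentiable f y -> f y + dot (grad f y) (y' - y) <= f y'.
Proof.
move=> f_cvx dfy; set d := y' - y.
set G := fun h : R => h^-1 *: ((f \o shift y) (h *: d) - f y).
have G_cvg : G @ 0^' --> 'D_d f y by exact: (@diff_derivable _ _ _ f y d dfy).
have G_cvg_right : G @ 0^'+ --> 'D_d f y.
  move=> X /G_cvg /nbhs_ballP [_ /posnumP[e] GX].
  by exists e%:num => //= h he /gt_eqF/negbT; apply: GX.
suff : 'D_d f y <= f y' - f y by rewrite (deriveE _ dfy) diff_grad //; lra.
apply: (cvgr_to_le G_cvg_right); near=> h.
have h_gt0 : 0 < h by near: h; exact: nbhs_right_gt.
have h_lt1 : h < 1 by near: h; exact: nbhs_right_lt.
have := f_cvx y' y h; rewrite (ltW h_gt0) (ltW h_lt1) => /(_ isT).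
have -> : h *: y' + (1 - h) *: y = h *: d + y.
  by apply/matrixP => i j; rewrite !mxE; ring.
move=> cvx_h; rewrite /G /= -[_ *: _]/(h^-1 * _) mulrC ler_pdivrMr //; lra.
Unshelve. all: by end_near.
Qed.

Section Sublevel.
Variables (R : realType) (T : topologicalType) (f : T -> R).
Hypothesis f_cont : continuous f.
Hypothesis f_sublevel : forall c, compact [set t | f t <= c].

Lemma compact_sublevel_argmin (t0 : T) : exists tm, forall t, f tm <= f t.
Proof.
have ne : [set t | f t <= f t0] !=set0 by exists t0 => /=.
have [tm /set_mem tm_le fm_min] :=
  compact_EVT_min ne (@f_sublevel (f t0)) (continuous_subspaceT f_cont).
exists tm => t; have [t_le|/ltW] := lerP (f t) (f t0); last exact: le_trans.
by apply: fm_min; rewrite inE.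
Qed.

Lemma compact_sublevel_gap (m : R) (U : set T) : open U ->
  [set t | f t = m] `<=` U -> (forall t, m <= f t) ->
  exists2 et, 0 < et & forall t, f t <= m + et -> U t.
Proof.
move=> U_open argmin_U f_ge_m.
set Bad := [set t | f t <= m + 1] `&` ~` U.
have Bad_compact : compact Bad.
  by apply: compact_closedI; [exact: (@f_sublevel (m + 1)) | exact: open_closedC].
have [Bad_ne|Bad0] := pselect (Bad !=set0); last first.
  exists 1 => // t t_le; apply: contrapT => Ut.
  by apply: Bad0; exists t.
have [tb /set_mem [tb_le tb_notU] tb_min] :=
  compact_EVT_min Bad_ne Bad_compact (continuous_subspaceT f_cont).
have m_lt : m < f tb.
  by rewrite lt_def f_ge_m andbT; apply/eqP => ftb; apply: tb_notU; apply: argmin_U.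
set et := Num.min 1 (f tb - m).
have et_gt0 : 0 < et by rewrite lt_min ltr01 subr_gt0.
have et_le1 : et <= 1 by rewrite ge_min lexx.
have et_le : et <= f tb - m by rewrite ge_min lexx orbT.
exists (et / 2); first by rewrite divr_gt0.
move=> t t_le; apply: contrapT => Ut.
have /tb_min : t \in Bad by rewrite inE; split => //=; lra.
lra.
Qed.

End Sublevel.

Lemma sublevel_near_argmin (R : realType) k (f : 'cV[R]_k -> R) (m : R) :
  continuous f -> (forall c, compact [set v | f v <= c]) -> (forall v, m <= f v) ->
  forall e, 0 < e -> exists2 et, 0 < et & forall v, f v <= m + et ->
    exists2 v0, f v0 = m & enorm (v - v0) < e.
Proof.
move=> f_cont f_sublevel f_ge_m e e_gt0.
have k1_gt0 : 0 < k%:R + 1 :> R by rewrite ltr_wpDl ?ler0n.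
set r := e / (k%:R + 1).
have r_gt0 : 0 < r by rewrite divr_gt0.
have ball_enorm (v v0 : 'cV[R]_k) : ball v0 r v -> enorm (v - v0) < e.
  rewrite -ball_normE /= distrC => vv0_lt.
  have kr_lt : k%:R * r < e by rewrite /r mulrA ltr_pdivrMr // mulrDr mulr1 mulrC ltrDl.
  apply: le_lt_trans (enorm_le_normr _) (le_lt_trans _ kr_lt).
  by rewrite ler_wpM2l ?ler0n ?ltW.
set U := \bigcup_(v0 in [set v0 | f v0 = m]) ball v0 r.
have U_open : open U by apply: bigcup_open => v0 _; apply: ball_open.
have argmin_U : [set v0 | f v0 = m] `<=` U.
  by move=> v0 fv0; exists v0 => //; apply: ballxx.
have [et et_gt0 near_U] := compact_sublevel_gap f_cont f_sublevel U_open argmin_U f_ge_m.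
exists et => // v /near_U [v0 fv0 v_near].
by exists v0 => //; apply: ball_enorm.
Qed.

Lemma derive1_leN_exists_lt0 (R : realType) (V : R -> R) (k : R) : 0 < k ->
  (forall t, 1 < t -> derivable V t 1) -> (forall t, 1 < t -> V^`() t <= - k) ->
  exists t, V t < 0.
Proof.
move=> k_gt0 dV dV_le.
pose F : R -> R := V + k \*: (@id R).
have dF (t : R) : 1 < t -> is_derive t 1 F ('D_1 V t + k).
  move=> t_gt1; apply: is_derive_eq.
    by apply: is_deriveD; exact: derivableP (dV t t_gt1).
  by rewrite [_%:A]mulr1.
have F_nonincr : forall s t, 1 < s -> s <= t -> F t <= F s.
  apply: derive1_le0_nonincreasing => t t_gt1; first by have [] := dF t t_gt1.
  rewrite derive1E (@derive_val _ _ _ _ _ _ _ (dF t t_gt1)) -derive1E.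
  by have := dV_le t t_gt1; lra.
set T := 3 + `|V 2| / k.
have T_ge2 : 2 <= T by rewrite /T; have := divr_ge0 (normr_ge0 (V 2)) (ltW k_gt0); lra.
have : V T + k * T <= V 2 + k * 2 := F_nonincr 2 T (ltr1n _ 2) T_ge2.
have -> : k * T = 3 * k + `|V 2| by rewrite /T; field; rewrite gt_eqF.
by exists T; have := ler_norm (V 2); lra.
Qed.

Lemma lyapunov_vanishing (R : realType) (V W : R -> R) (d : R) :
  0 < d -> (forall t, 0 <= V t) -> (forall t, 0 <= W t) ->
  (forall t, 0 < t -> derivable V t 1) ->
  (forall t, 0 < t -> V^`() t <= - (d * W t)) ->
  (forall et, 0 < et -> exists2 rho, 0 < rho & forall t, 1 <= t -> W t < rho -> V t < et) ->
  forall et, 0 < et -> \forall t \near +oo, V t < et.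
Proof.
move=> d_gt0 V_ge0 W_ge0 dV dV_le W_small et et_gt0.
have V_nonincr : forall s t, 0 < s -> s <= t -> V t <= V s.
  apply: derive1_le0_nonincreasing dV _ => t t_gt0.
  by apply: le_trans (dV_le t t_gt0) _; rewrite oppr_le0 mulr_ge0 // ltW.
suff [T T_ge1 VT_lt] : exists2 T, 1 <= T & V T < et.
  near=> t; apply: le_lt_trans VT_lt; apply: V_nonincr; first lra.
  by near: t; apply: nbhs_pinfty_ge; rewrite num_real.
have [rho rho_gt0 V_lt] := W_small et et_gt0.
apply: contrapT => V_ge.
have W_ge t : 1 <= t -> rho <= W t.
  move=> t_ge1; rewrite leNgt; apply/negP => /(V_lt t t_ge1) Vt_lt.
  by apply: V_ge; exists t.
have [|t|t t_gt1|t] := @derive1_leN_exists_lt0 R V (d * rho); rewrite ?mulr_gt0 //.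
- by move=> t_gt1; apply: dV; lra.
- apply: le_trans (dV_le t _) _; first lra.
  by rewrite lerN2 ler_wpM2l ?W_ge ?ltW.
- by rewrite ltNge V_ge0.
Unshelve. all: by end_near.
Qed.

Lemma lyapunov_quadratic_bound (R : realFieldType) (a b c c' eps ell : R) :
  0 <= a -> 0 <= b -> 0 <= c -> c <= c' -> 0 < eps -> 0 < ell ->
  0 < 2 * eps * c' * ell < 1 ->
  - a ^+ 2 + 2 * eps * c * a * b - (2 * c' / ell) * eps * (b ^+ 2 - ell * a * b)
  <= - ((1 - 2 * eps * c' * ell) / 2) * a ^+ 2
     - ((2 * eps * c' * ell) * (1 - 2 * eps * c' * ell)
        / ((1 + 2 * eps * c' * ell) * ell ^+ 2)) * b ^+ 2.
Proof.
move=> a_ge0 b_ge0 c_ge0 c_le eps_gt0 ell_gt0 /andP[r_gt0 r_lt1].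
set r := 2 * eps * c' * ell in r_gt0 r_lt1 *.
have b_ell : b = ell * (b / ell) by field; rewrite gt_eqF.
set s := b / ell in b_ell.
have s_ge0 : 0 <= s by rewrite divr_ge0 // ltW.
have -> : - a ^+ 2 + 2 * eps * c * a * b - (2 * c' / ell) * eps * (b ^+ 2 - ell * a * b)
    = - a ^+ 2 + 2 * eps * c * ell * a * s - r * s ^+ 2 + r * a * s.
  by rewrite b_ell /r; field; rewrite gt_eqF.
have c_c' : 2 * eps * c * ell * a * s <= r * a * s.
  have : 0 <= 2 * eps * ell * a * s * (c' - c).
    by rewrite !mulr_ge0 ?subr_ge0 ?invr_ge0 ?(ltW eps_gt0) ?(ltW ell_gt0).
  by rewrite /r; lra.
have square : - ((1 - r) / 2) * a ^+ 2 - (r * (1 - r) / ((1 + r) * ell ^+ 2)) * b ^+ 2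
    - (- a ^+ 2 + r * a * s - r * s ^+ 2 + r * a * s)
    = (1 + r) / 2 * (a - 2 * r * s / (1 + r)) ^+ 2.
  by rewrite b_ell; field; rewrite gt_eqF ?mulr_gt0 ?exprn_gt0 //; lra.
have : 0 <= (1 + r) / 2 * (a - 2 * r * s / (1 + r)) ^+ 2.
  by rewrite mulr_ge0 ?sqr_ge0 // divr_ge0 //; lra.
lra.
Qed.

Section ReducedModel.
Variables (R : realType) (n p q : nat) (A : 'M[R]_n) (B : 'M[R]_(n, p)) (Q : 'M[R]_(n, q)).

Lemma mulmx_Hmat : A \in unitmx -> A *m Hmat A B = - B.
Proof. by move=> A_unit; rewrite /Hmat mulmxN mulmxA mulmxV ?mul1mx. Qed.

Lemma mulmx_Rmat : A \in unitmx -> A *m Rmat A Q = - Q.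
Proof. by move=> A_unit; rewrite /Rmat mulmxN mulmxA mulmxV ?mul1mx. Qed.

Lemma dot_HtT (g : 'cV[R]_(n + p)) v :
  dot g (col_mx (Hmat A B) 1%:M *m v) = dot (HtT A B *m g) v.
Proof. by rewrite dot_mulmx tr_col_mx trmx1. Qed.

Lemma diff_Phitil (Phi : 'cV[R]_(n + p) -> R) w u v :
  differentiable Phi (col_mx (Hmat A B *m u + Rmat A Q *m w) u) ->
  differentiable (Phitil A B Q Phi w) u ->
  'd (Phitil A B Q Phi w) u v =
    dot (HtT A B *m grad Phi (col_mx (Hmat A B *m u + Rmat A Q *m w) u)) v.
Proof.
move=> dPhi dPhitil; rewrite -deriveE // -dot_HtT -diff_grad // -deriveE //.
set y := col_mx (Hmat A B *m u + Rmat A Q *m w) u.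
have shifted h : Phitil A B Q Phi w (h *: v + u) = Phi (h *: (col_mx (Hmat A B) 1%:M *m v) + y).
  rewrite /Phitil mul_col_mx mul1mx scale_col_mx add_col_mx.
  by congr (Phi (col_mx _ _)); rewrite mulmxDr addrA scalemxAr.
by rewrite /derive /=; under eq_fun do rewrite shifted.
Qed.

Lemma solution_set_argmin (Phi : 'cV[R]_(n + p) -> R) w v :
  (forall v', Phitil A B Q Phi w v <= Phitil A B Q Phi w v') ->
  solution_set A B Q Phi w (Hmat A B *m v + Rmat A Q *m w, v).
Proof. by move=> v_min; split => // x' u' ->; apply: v_min. Qed.

End ReducedModel.

Section ClosedLoop.
Variables (R : realType) (n p q : nat) (A : 'M[R]_n) (B : 'M[R]_(n, p)) (Q : 'M[R]_(n, q)).
Variables (Phi : 'cV[R]_(n + p) -> R) (w : 'cV[R]_q) (eps ell : R) (P : 'M[R]_n).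
Hypothesis Phi_diff : forall z, differentiable Phi z.
Hypothesis eps_gt0 : 0 < eps.
Hypothesis P_sym : P^T = P.
Hypothesis P_posdef : forall v, v != 0 -> 0 < qform P v.
Hypothesis lyapunov : forall v, qform (A^T *m P + P *m A) v <= - qform 1%:M v.
Hypothesis Phitil_diff : forall u, differentiable (Phitil A B Q Phi w) u.
Hypothesis ell_gt0 : 0 < ell.
Hypothesis grad_lipschitz : forall x x' u,
  enorm (HtT A B *m (grad Phi (col_mx x u) - grad Phi (col_mx x' u))) <= ell * enorm (x - x').
Hypothesis sublevel_compact : forall c, compact [set u | Phitil A B Q Phi w u <= c].
Hypothesis Phi_convex : convex_fun Phi.
Hypothesis eps_small : eps * (2 * ell * opnorm (P *m Hmat A B)) < 1.
Variables (x : R -> 'cV[R]_n) (u : R -> 'cV[R]_p).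
Hypothesis trajectory : forall t, 0 < t ->
  derivable x t 1 /\ derivable u t 1 /\
  x^`() t = A *m x t + B *m u t + Q *m w /\
  u^`() t = - (eps *: (HtT A B *m grad Phi (col_mx (x t) (u t)))).
Variable us : 'cV[R]_p.
Hypothesis us_min : forall v, Phitil A B Q Phi w us <= Phitil A B Q Phi w v.

Implicit Types t : R.

Local Notation H := (Hmat A B).
Local Notation L := (HtT A B).
Local Notation Phit := (Phitil A B Q Phi w).

(* [xeq v] is the equilibrium of the plant for the input [v], [zdev] the distance of
   the state to it; [u' = - eps fgrad], and [rgrad] is the gradient of [Phit] at [u]. *)
Let xeq v := H *m v + Rmat A Q *m w.
Let zdev t := x t - xeq (u t).
Let fgrad t := L *m grad Phi (col_mx (x t) (u t)).
Let rgrad t := L *m grad Phi (col_mx (xeq (u t)) (u t)).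

Lemma enorm_fgrad_rgrad t : enorm (fgrad t - rgrad t) <= ell * enorm (zdev t).
Proof. by rewrite -mulmxBr; apply: grad_lipschitz. Qed.

Lemma is_derive_traj t : 0 < t ->
  is_derive t 1 x (A *m x t + B *m u t + Q *m w) /\ is_derive t 1 u (- (eps *: fgrad t)).
Proof.
move=> /trajectory [dx [du [x' u']]].
by split; [apply: is_derive_eq (derivableP dx) _ | apply: is_derive_eq (derivableP du) _];
  rewrite -derive1E.
Qed.

Lemma is_derive_zdev t : 0 < t -> is_derive t 1 zdev (A *m zdev t + eps *: (H *m fgrad t)).
Proof.
move=> /is_derive_traj [dx du].
have zdevE : zdev = x - (fun s => H *m u s) - cst (Rmat A Q *m w).
  by apply/funext => s; rewrite /zdev /xeq /= opprD addrA.
rewrite {1}zdevE.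
apply: is_derive_eq.
  apply: is_deriveB.
  by apply: is_deriveB => //; apply: is_derive_mulmxl.
rewrite subr0 /zdev /xeq mulmxN -scalemxAr mulmxBr mulmxDr !mulmxA.
rewrite mulmx_Hmat ?mulmx_Rmat ?(lyapunov_unitmx P_sym lyapunov) //.
by rewrite !mulNmx opprK; apply/matrixP => i j; rewrite !mxE; ring.
Qed.

Lemma is_derive_qform_zdev t : 0 < t ->
  is_derive t 1 (fun s => qform P (zdev s))
    (2 * dot (zdev t) (P *m (A *m zdev t)) + 2 * eps * dot (zdev t) (P *m (H *m fgrad t))).
Proof.
move=> /is_derive_zdev dz.
have -> : (fun s => qform P (zdev s)) = (fun s => dot (zdev s) (P *m zdev s)).
  by apply/funext => s; rewrite qformE.
apply: is_derive_eq; first exact: is_derive_dot dz (is_derive_mulmxl P dz).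
rewrite dot_mulmx P_sym dotC mulmxDr -scalemxAr dotDr dotZr.
by rewrite -/(dot _ _); ring.
Qed.

Lemma is_derive_Phitil_traj t : 0 < t ->
  is_derive t 1 (Phit \o u) (- eps * dot (rgrad t) (fgrad t)).
Proof.
move=> /is_derive_traj [_ du].
apply: is_derive_eq; first exact: is_derive1_diff_comp du (Phitil_diff (u t)).
by rewrite diff_Phitil // dotNr dotZr mulNr.
Qed.

Let c := opnorm (P *m H).
(* Any [gain] in ]c, 1 / (2 eps ell)[ works; staying strictly above [c] keeps the
   [|fgrad|^2] term of the bound on the derivative of [lyap] negative even if [P H = 0]. *)
Let gain := (c + (2 * (eps * ell))^-1) / 2.
Let rate := 2 * eps * gain * ell.
Let kappa := 2 * gain / ell.
Let decay := Num.min ((1 - rate) / 2) (rate * (1 - rate) / ((1 + rate) * ell ^+ 2)).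

Lemma gain_ge : c <= gain.
Proof.
have c_lt : c < (2 * (eps * ell))^-1.
  have el_gt0 : 0 < 2 * (eps * ell) by rewrite !mulr_gt0.
  rewrite -(ltr_pM2l el_gt0) mulfV ?gt_eqF //.
  by move: eps_small; rewrite /c; lra.
by rewrite /gain; lra.
Qed.

Lemma rate_bounds : 0 < rate < 1.
Proof.
have -> : rate = eps * ell * c + 1 / 2 by rewrite /rate /gain; field; rewrite !gt_eqF.
have : 0 <= eps * ell * c by rewrite !mulr_ge0 ?opnorm_ge0 ?ltW.
by move: eps_small; rewrite /c; lra.
Qed.

Lemma gain_gt0 : 0 < gain.
Proof. by rewrite divr_gt0 // ltr_wpDl ?opnorm_ge0 // invr_gt0 !mulr_gt0. Qed.

Lemma kappa_gt0 : 0 < kappa.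
Proof. by rewrite divr_gt0 // mulr_gt0 // gain_gt0. Qed.

Lemma decay_gt0 : 0 < decay.
Proof.
have /andP[r_gt0 r_lt1] := rate_bounds.
have r1_gt0 : 0 < 1 - rate by rewrite subr_gt0.
have d1_gt0 : 0 < (1 - rate) / 2 by rewrite divr_gt0.
have d2_gt0 : 0 < rate * (1 - rate) / ((1 + rate) * ell ^+ 2).
  by apply: divr_gt0; apply: mulr_gt0 => //; [exact: addr_gt0 | exact: exprn_gt0].
by rewrite lt_min d1_gt0 d2_gt0.
Qed.

Let lyap t := qform P (zdev t) + kappa * (Phit (u t) - Phit us).

Lemma lyap_ge0 t : 0 <= lyap t.
Proof.
rewrite addr_ge0 ?(qform_ge0 P_posdef) // mulr_ge0 ?subr_ge0 //.
exact: ltW kappa_gt0.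
Qed.

Lemma is_derive_lyap t : 0 < t -> is_derive t 1 lyap
  (2 * dot (zdev t) (P *m (A *m zdev t)) + 2 * eps * dot (zdev t) (P *m (H *m fgrad t))
   + kappa * (- eps * dot (rgrad t) (fgrad t))).
Proof.
move=> t_gt0.
have -> : lyap = (fun s => qform P (zdev s)) + kappa \*: (Phit \o u - cst (Phit us)).
  by apply/funext => s.
apply: is_derive_eq (is_deriveD (is_derive_qform_zdev t_gt0)
  (is_deriveZ kappa (is_deriveB (is_derive_Phitil_traj t_gt0) (is_derive_cst _ _ _)))) _.
by rewrite subr0.
Qed.

Lemma derive_lyap_le t : 0 < t ->
  lyap^`() t <= - (decay * (enorm (zdev t) ^+ 2 + enorm (fgrad t) ^+ 2)).
Proof.
move=> t_gt0; rewrite derive1E (@derive_val _ _ _ _ _ _ _ (is_derive_lyap t_gt0)).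
set a := enorm (zdev t); set b := enorm (fgrad t).
have stable : 2 * dot (zdev t) (P *m (A *m zdev t)) <= - a ^+ 2.
  by have := lyapunov_dot P_sym lyapunov (zdev t); rewrite -/a; lra.
have coupling : 2 * eps * dot (zdev t) (P *m (H *m fgrad t)) <= 2 * eps * c * a * b.
  rewrite -!mulrA ler_wpM2l // ler_wpM2l ?(ltW eps_gt0) // mulmxA mulrCA.
  by apply: le_trans (dot_le _ _) _; rewrite ler_wpM2l ?enorm_ge0 ?enorm_mulmx_le.
have descent : b ^+ 2 - ell * a * b <= dot (rgrad t) (fgrad t).
  have -> : dot (rgrad t) (fgrad t) = b ^+ 2 - dot (fgrad t - rgrad t) (fgrad t).
    by rewrite dotBl enorm_sqr; ring.
  suff : dot (fgrad t - rgrad t) (fgrad t) <= ell * a * b by lra.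
  by apply: le_trans (dot_le _ _) _; rewrite ler_wpM2r ?enorm_ge0 ?enorm_fgrad_rgrad.
have descent' : kappa * (- eps * dot (rgrad t) (fgrad t))
    <= - (kappa * eps * (b ^+ 2 - ell * a * b)).
  by rewrite mulNr mulrN -mulrA lerN2 ler_wpM2l ?(ltW kappa_gt0) // ler_wpM2l ?(ltW eps_gt0).
have := lyapunov_quadratic_bound (enorm_ge0 (zdev t)) (enorm_ge0 (fgrad t))
  (opnorm_ge0 _) gain_ge eps_gt0 ell_gt0 rate_bounds; rewrite -/c -/kappa -/rate -/a -/b.
have decay1 : decay * a ^+ 2 <= (1 - rate) / 2 * a ^+ 2.
  by rewrite ler_wpM2r ?sqr_ge0 // ge_min lexx.
have decay2 : decay * b ^+ 2 <= rate * (1 - rate) / ((1 + rate) * ell ^+ 2) * b ^+ 2.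
  by rewrite ler_wpM2r ?sqr_ge0 // ge_min lexx orbT.
lra.
Qed.

Lemma lyap_nonincreasing s t : 0 < s -> s <= t -> lyap t <= lyap s.
Proof.
apply: derive1_le0_nonincreasing => r r_gt0; first by have [] := is_derive_lyap r_gt0.
apply: le_trans (derive_lyap_le r_gt0) _.
by rewrite oppr_le0 mulr_ge0 ?(ltW decay_gt0) // addr_ge0 ?sqr_ge0.
Qed.

Lemma Phitil_traj_le t : 1 <= t -> Phit (u t) <= Phit us + lyap 1 / kappa.
Proof.
move=> t_ge1; rewrite addrC -lerBlDr ler_pdivlMr ?kappa_gt0 // mulrC.
apply: le_trans (lyap_nonincreasing ltr01 t_ge1).
by rewrite /lyap lerDr (qform_ge0 P_posdef).
Qed.

Lemma traj_bounded : exists2 D, 0 <= D & forall t, 1 <= t -> enorm (u t - us) <= D.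
Proof.
have [M M_gt0 M_bound] := pinfty_ex_gt0 (compact_bounded
  (@sublevel_compact (Phit us + lyap 1 / kappa))).
have bound v : Phit v <= Phit us + lyap 1 / kappa -> enorm v <= p%:R * M.
  move=> v_le; apply: le_trans (enorm_le_normr _) _.
  by rewrite ler_wpM2l ?ler0n // M_bound.
have us_le : Phit us <= Phit us + lyap 1 / kappa.
  by rewrite lerDl divr_ge0 ?lyap_ge0 ?(ltW kappa_gt0).
exists (2 * (p%:R * M)) => [|t t_ge1]; first by rewrite !mulr_ge0 ?ler0n ?ltW.
apply: le_trans (enormD _ _) _; rewrite enormN.
by have := bound _ (Phitil_traj_le t_ge1); have := bound _ us_le; lra.
Qed.

Lemma Phitil_gap t : Phit (u t) - Phit us <= enorm (rgrad t) * enorm (u t - us).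
Proof.
have := convex_fun_grad_le (col_mx (xeq us) us) Phi_convex (Phi_diff (col_mx (xeq (u t)) (u t))).
have -> : col_mx (xeq us) us - col_mx (xeq (u t)) (u t) = col_mx H 1%:M *m (us - u t).
  rewrite mul_col_mx mul1mx opp_col_mx add_col_mx /xeq mulmxBr.
  by congr col_mx; rewrite opprD addrACA subrr addr0.
rewrite dot_HtT -/(rgrad t) -/(Phit us) -/(Phit (u t)) => convexity.
have := normr_dot_le (rgrad t) (us - u t); rewrite enormB.
have := ler_norm (- dot (rgrad t) (us - u t)); rewrite normrN.
lra.
Qed.

Lemma lyap_le D : (forall t, 1 <= t -> enorm (u t - us) <= D) -> forall t, 1 <= t ->
  lyap t <= opnorm P * enorm (zdev t) ^+ 2 + kappa * ((enorm (fgrad t) + ell * enorm (zdev t)) * D).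
Proof.
move=> D_bound t t_ge1; rewrite /lyap lerD ?qform_le // ler_wpM2l ?(ltW kappa_gt0) //.
apply: le_trans (Phitil_gap t) _; apply: ler_pM; rewrite ?enorm_ge0 ?D_bound //.
have -> : rgrad t = fgrad t - (fgrad t - rgrad t) by rewrite opprB addrC subrK.
by apply: le_trans (enormD _ _) _; rewrite enormN lerD2l enorm_fgrad_rgrad.
Qed.

Lemma lyap_lt_of_small et : 0 < et -> exists2 rho, 0 < rho & forall t, 1 <= t ->
  enorm (zdev t) ^+ 2 + enorm (fgrad t) ^+ 2 < rho -> lyap t < et.
Proof.
move=> et_gt0; have [D D_ge0 D_bound] := traj_bounded.
set S := opnorm P + kappa * D * (1 + ell).
have S_ge0 : 0 <= S.
  apply: addr_ge0; first exact: opnorm_ge0.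
  apply: mulr_ge0; first by apply: mulr_ge0 => //; exact: ltW kappa_gt0.
  by rewrite addr_ge0 // ltW.
set r := Num.min 1 (et / (S + 1)).
have r_gt0 : 0 < r by rewrite lt_min ltr01 divr_gt0 // ltr_wpDl.
have r_le1 : r <= 1 by rewrite ge_min lexx.
have Sr_lt : S * r < et.
  apply: le_lt_trans (_ : S * (et / (S + 1)) < et); first by rewrite ler_wpM2l // ge_min lexx orbT.
  by rewrite mulrCA gtr_pMr // ltr_pdivrMr ?ltr_wpDl // mul1r ltrDl.
exists (r ^+ 2) => [|t t_ge1]; first exact: exprn_gt0.
have := enorm_ge0 (zdev t); have := enorm_ge0 (fgrad t).
move: (enorm (zdev t)) (enorm (fgrad t)) (lyap_le D_bound t_ge1) => a b lyap_le a_ge0 b_ge0 small.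
have a_lt : a < r by rewrite ltNge; apply/negP => r_le_a; nra.
have b_lt : b < r by rewrite ltNge; apply/negP => r_le_b; nra.
have a2_le : a ^+ 2 <= r by nra.
have P_le : opnorm P * a ^+ 2 <= opnorm P * r by rewrite ler_wpM2l ?opnorm_ge0.
have grad_le : kappa * ((b + ell * a) * D) <= kappa * ((r + ell * r) * D).
  rewrite ler_wpM2l ?(ltW kappa_gt0) // ler_wpM2r //.
  by apply: lerD; [exact: ltW | rewrite ler_wpM2l ?ltW].
have : S * r = opnorm P * r + kappa * ((r + ell * r) * D) by rewrite /S; ring.
lra.
Qed.

Lemma lyap_vanishes et : 0 < et -> \forall t \near +oo, lyap t < et.
Proof.
apply: (lyapunov_vanishing decay_gt0 lyap_ge0) => [t|t|t t_gt0|]; last exact: lyap_lt_of_small.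
- by rewrite addr_ge0 ?sqr_ge0.
- by move=> /is_derive_lyap [].
- exact: derive_lyap_le.
Qed.

Lemma zdev_vanishes e : 0 < e -> \forall t \near +oo, enorm (zdev t) < e.
Proof.
move=> e_gt0; set K := 4 * opnorm P * opnorm A ^+ 2.
have K_ge0 : 0 <= K by rewrite !mulr_ge0 ?opnorm_ge0 ?sqr_ge0.
have K1_gt0 : 0 < K + 1 by rewrite ltr_wpDl.
near=> t.
have : lyap t < e ^+ 2 / (K + 1).
  by near: t; apply: lyap_vanishes; rewrite divr_gt0 ?exprn_gt0.
rewrite ltr_pdivlMr // => lyap_lt.
have z_le := enorm_sqr_le_qform P_sym P_posdef lyapunov (zdev t); rewrite -/K in z_le.
have q_le : qform P (zdev t) <= lyap t.
  by rewrite /lyap lerDl mulr_ge0 ?subr_ge0 // ltW ?kappa_gt0.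
have Kq_le : K * qform P (zdev t) <= K * lyap t by rewrite ler_wpM2l.
have : enorm (zdev t) ^+ 2 < e ^+ 2 by have := lyap_ge0 t; lra.
move=> z2_lt; rewrite ltNge; apply/negP => e_le.
by have := enorm_ge0 (zdev t); nra.
Unshelve. all: by end_near.
Qed.

Lemma Phitil_traj_vanishes et : 0 < et -> \forall t \near +oo, Phit (u t) <= Phit us + et.
Proof.
move=> et_gt0; near=> t.
have : lyap t < kappa * et by near: t; apply: lyap_vanishes; rewrite mulr_gt0 ?kappa_gt0.
rewrite /lyap => lyap_lt.
have : kappa * (Phit (u t) - Phit us) < kappa * et.
  by have := qform_ge0 P_posdef (zdev t); lra.
by rewrite ltr_pM2l ?kappa_gt0 //; lra.
Unshelve. all: by end_near.
Qed.

Lemma traj_dist t v : enorm (col_mx (x t) (u t) - col_mx (xeq v) v)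
  <= enorm (zdev t) + (opnorm H + 1) * enorm (u t - v).
Proof.
have -> : col_mx (x t) (u t) - col_mx (xeq v) v = col_mx (zdev t + H *m (u t - v)) (u t - v).
  rewrite opp_col_mx add_col_mx /zdev /xeq mulmxBr; congr col_mx.
  by apply/matrixP => i j; rewrite !mxE; ring.
apply: le_trans (enorm_col_mx _ _) _.
have := enormD (zdev t) (H *m (u t - v)); have := enorm_mulmx_le H (u t - v).
lra.
Qed.

Lemma traj_converges e : 0 < e -> \forall t \near +oo,
  exists2 s, solution_set A B Q Phi w s & enorm (col_mx (x t) (u t) - col_mx s.1 s.2) < e.
Proof.
move=> e_gt0; set C := opnorm H + 1.
have C_gt0 : 0 < C by rewrite ltr_wpDl ?opnorm_ge0.
have [et et_gt0 near_min] := sublevel_near_argmin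
  (fun v => differentiable_continuous (Phitil_diff v)) sublevel_compact us_min
  (divr_gt0 e_gt0 (mulr_gt0 (ltr0Sn _ 1) C_gt0)).
near=> t.
have : Phit (u t) <= Phit us + et by near: t; exact: Phitil_traj_vanishes.
move=> /near_min [v v_min uv_lt].
exists (xeq v, v); first by apply: solution_set_argmin => v'; rewrite v_min.
apply: le_lt_trans (traj_dist t v) _.
have : enorm (zdev t) < e / 2 by near: t; apply: zdev_vanishes; rewrite divr_gt0.
have : C * enorm (u t - v) < e / 2.
  by move: uv_lt; rewrite !ltr_pdivlMr ?mulr_gt0 //; lra.
rewrite -/C; lra.
Unshelve. all: by end_near.
Qed.

End ClosedLoop.

Theorem corollary1 (R : realType) (n p q : nat)
  (A : 'M[R]_n) (B : 'M[R]_(n, p)) (Q : 'M[R]_(n, q))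
  (Phi : 'cV[R]_(n + p) -> R) (w : 'cV[R]_q) (eps ell : R) (P : 'M[R]_n) :
  (forall z, differentiable Phi z) ->
  0 < eps ->
  (* (i) *)
  P^T = P -> (forall v, v != 0 -> 0 < qform P v) ->
  (forall v, qform (A^T *m P + P *m A) v <= - qform 1%:M v) ->
  (* (ii) *)
  (forall w' u, differentiable (Phitil A B Q Phi w') u) ->
  (* (iii) *)
  0 < ell ->
  (forall x x' u, enorm (HtT A B *m (grad Phi (col_mx x u) - grad Phi (col_mx x' u)))
                   <= ell * enorm (x - x')) ->
  (* (iv) *)
  (forall c : R, compact [set u : 'cV[R]_p | Phitil A B Q Phi w u <= c]) ->
  (* (v) *)
  convex_fun Phi ->
  (* eps < 1 / (2 ell ||P H||), read with 1/0 = +infinity *)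
  eps * (2 * ell * opnorm (P *m Hmat A B)) < 1 ->
  forall (x : R -> 'cV[R]_n) (u : R -> 'cV[R]_p),
    (forall t, 0 < t ->
       derivable x t 1 /\ derivable u t 1 /\
       x^`() t = A *m x t + B *m u t + Q *m w /\
       u^`() t = - (eps *: (HtT A B *m grad Phi (col_mx (x t) (u t))))) ->
    forall e : R, 0 < e ->
      \forall t \near +oo, exists2 s, solution_set A B Q Phi w s &
        enorm (col_mx (x t) (u t) - col_mx s.1 s.2) < e.
Proof.
move=> Phi_diff eps_gt0 P_sym P_posdef lyapunov Phitil_diff ell_gt0 grad_lipschitz
  sublevel_compact Phi_convex eps_small x u trajectory e e_gt0.
have [us us_min] := compact_sublevel_argmin
  (fun v => differentiable_continuous (Phitil_diff w v)) sublevel_compact 0.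
exact: (traj_converges Phi_diff eps_gt0 P_sym P_posdef lyapunov (Phitil_diff w) ell_gt0
  grad_lipschitz sublevel_compact Phi_convex eps_small trajectory us_min e_gt0).
Qed.
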